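(* Let $\varphi=\frac{1+\sqrt5}{2}$ and write $[\varphi]_q=\sum_{k\geq0}\phi_kq^k$. Let $(a_n)_{n\geq0}$ be the generalized Catalan numbers, defined by $a_0=a_1=1$ and $$a_n=a_{n-1}+\sum_{k=1}^{n-2}a_ka_{n-2-k}\qquad(n\geq2).$$ These are the numbers $1,1,1,2,4,8,17,37,82,185,\ldots$; equivalently, their generating function $A(x)=\sum_n a_nx^n$ satisfies $A=1+xA+x^2A^2-x^2A$. Then $$\phi_k=(-1)^ka_{k-1}\qquad\text{for all }k\geq2,$$ and moreover $\phi_0=1$, $\phi_1=0$.
   Context: For an integer $a\geq1$ put $[a]_q=1+q+\cdots+q^{a-1}$ and $[a]_{q^{-1}}=1+q^{-1}+\cdots+q^{-(a-1)}$. Every rational number $r/s>1$ has a unique even-length regular continued fraction $r/s=[a_1,\ldots,a_{2m}]$ with $a_i\in\mathbb{Z}_{\geq1}$. Its $q$-deformation is the rational function $$\left[\tfrac{r}{s}\right]_q=[a_1]_q+\cfrac{q^{a_1}}{[a_2]_{q^{-1}}+\cfrac{q^{-a_2}}{[a_3]_q+\cfrac{q^{a_3}}{\ddots+\cfrac{q^{a_{2m-1}}}{[a_{2m}]_{q^{-1}}}}}}.$$ One also sets $[1]_q=1$. Each $[r/s]_q$ is identified with its Taylor expansion at $q=0$. For an irrational real number $x>1$ with continued fraction $x=[a_1,a_2,\ldots]$ and convergents $x_n=[a_1,\ldots,a_n]$, define $$[x]_q:=\sum_{k\geq0}\varkappa_kq^k,\qquad \varkappa_k=\lim_{n\to\infty}\bigl(\text{coefficient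 of }q^k\text{ in }[x_n]_q\bigr).$$ These limits exist and are eventually attained. Here $\varphi=[1,1,1,\ldots]$. *)

From HB Require Import structures.
From mathcomp Require Import all_boot all_order all_algebra.
Set Implicit Arguments. Unset Strict Implicit. Unset Printing Implicit Defensive.
Import Order.TTheory GRing.Theory Num.Theory.
Local Open Scope ring_scope.

Definition qint (a : nat) : {poly rat} := \sum_(i < a) 'X^i.

(* Evaluation of the q-continued fraction
     [a1]_q + q^a1 / ([a2]_{q^-1} + q^-a2 / ([a3]_q + ...  / [a_{2m}]_{q^-1}))
   as a pair (N, D) of polynomials with value N / D.  The boolean says whether
   the current entry is at an odd position (q-type) or even position (q^-1-type).
   Even-position steps are cleared of negative powers:
     [a]_{q^-1} = q^{-(a-1)} [a]_q,
     [a]_{q^-1} + q^{-a} D/N = (q [a]_q N + D) / (q^a N). *)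
Fixpoint qcf_aux (l : seq nat) (oddpos : bool) : {poly rat} * {poly rat} :=
  match l with
  | [::] => (0, 1)
  | a :: t =>
      match t with
      | [::] => if oddpos then (qint a, 1) else (qint a, 'X^(a.-1))
      | _ :: _ =>
          let p := qcf_aux t (~~ oddpos) in
          if oddpos then (qint a * p.1 + 'X^a * p.2, p.1)
          else ('X * qint a * p.1 + p.2, 'X^a * p.1)
      end
  end.

(* The even-length regular continued fraction of [a_1,...,a_n]:
   [..., b, 1] = [..., b+1]   and   [..., a] = [..., a-1, 1]. *)
Definition even_cf (l : seq nat) : seq nat :=
  if ~~ odd (size l) then l else
  match rev l with
  | 1%N :: b :: r => rev (b.+1 :: r)
  | a :: r => rev (1%N :: a.-1 :: r)
  | [::] => [::]
  end.

(* [x]_q as a rational function N/D, for x = [a_1,...,a_n] (all a_i >= 1);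
   the convention [1]_q = 1 is used for x = 1. *)
Definition qrat_cf (l : seq nat) : {poly rat} * {poly rat} :=
  if l == [:: 1%N] then (1, 1) else qcf_aux (even_cf l) true.

(* Power series coefficients c_0..c_k of N / D when D(0) <> 0:
   c_k = (N_k - sum_{1<=j<=k} D_j c_{k-j}) / D_0. *)
Fixpoint psc (N D : {poly rat}) (k : nat) : seq rat :=
  match k with
  | 0 => [:: N`_0 / D`_0]
  | k'.+1 =>
      let s := psc N D k' in
      rcons s ((N`_k'.+1 - \sum_(1 <= j < k'.+2) D`_j * nth 0 s (k'.+1 - j)) / D`_0)
  end.

(* Write D = q^m D' with D'(0) <> 0. *)
Definition lowdeg (D : {poly rat}) : nat := find (fun c => c != 0) D.
Definition unshift (D : {poly rat}) : {poly rat} := Poly (drop (lowdeg D) D).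

Definition taylor_coef (N D : {poly rat}) (k : nat) : rat :=
  nth 0 (psc N (unshift D) (k + lowdeg D)) (k + lowdeg D).

(* Coefficient of q^k in [x_n]_q, where x_n = [a 0, ..., a (n-1)] is the n-th
   convergent of the continued fraction [a_1, a_2, ...] (with a_{i+1} = a i). *)
Definition conv_coef (a : nat -> nat) (n k : nat) : rat :=
  let p := qrat_cf (mkseq a n) in taylor_coef p.1 p.2 k.

Definition qcoef_limit (a : nat -> nat) (k : nat) (c : rat) : Prop :=
  exists N, forall n, (N <= n)%N -> conv_coef a n k = c.

Definition phi_cf : nat -> nat := fun _ => 1%N.

From HB Require Import structures.
From mathcomp Require Import all_boot all_order all_algebra.
From mathcomp Require Import ring zify.
Set Implicit Arguments. Unset Strict Implicit. Unset Printing Implicit Defensive.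
Import Order.TTheory GRing.Theory Num.Theory.
Local Open Scope ring_scope.

(* 1. The n-th convergent of phi = [1,1,1,...] has even-length expansion
      [1,...,1] or [1,...,1,2]; unfolding the q-continued fraction two
      entries at a time, [x_n]_q = N/D where (N, D) is obtained from a seed
      pair by iterating the Moebius step (N, D) |-> ((q+q^2) N + D, q N + D).
   2. Let C be the truncation below degree K of the claimed series
      sum_k phi_k q^k.  The recurrence of the a_n says that C solves the
      fixed-point equation C = (C q + C q^2 + 1)/(q C + 1) of the step modulo
      q^K.  Since moreover C = 1 + q modulo q, each step makes N - C D
      vanish to two more orders, up to order K.
   3. If N - C D vanishes below order K and D(0) = 1, then the first K
      Taylor coefficients of N/D, as computed by [taylor_coef], are those
      of C.  Hence the coefficient of q^k in [x_n]_q is phi_k as soon as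
      n >= 2k + 4, which is the claimed stabilisation. *)

Section VanishesBelow.
Variable R : nzRingType.

Definition vanishes_below (n : nat) (p : {poly R}) : Prop :=
  forall i, (i < n)%N -> p`_i = 0.

Lemma vanishes_below_le m n p :
  (m <= n)%N -> vanishes_below n p -> vanishes_below m p.
Proof. by move=> lemn hp i him; apply: hp; apply: leq_trans lemn. Qed.

Lemma vanishes_belowD n p r :
  vanishes_below n p -> vanishes_below n r -> vanishes_below n (p + r).
Proof. by move=> hp hr i hi; rewrite coefD hp // hr // addr0. Qed.

Lemma vanishes_belowXM n p : vanishes_below n p -> vanishes_below n.+1 ('X * p).
Proof. by move=> hp [|i] hi; rewrite coefXM //= hp. Qed.

Lemma vanishes_belowM m n p r :
  vanishes_below m p -> vanishes_below n r -> vanishes_below (m + n) (p * r).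
Proof.
move=> hp hr i hi; rewrite coefM big1 // => j _.
have [ltjm | lemj] := ltnP j m; first by rewrite hp // mul0r.
by rewrite hr ?mulr0 //; have := ltn_ord j; lia.
Qed.

End VanishesBelow.

Lemma size_psc (N D : {poly rat}) k : size (psc N D k) = k.+1.
Proof. by elim: k => //= k IH; rewrite size_rcons IH. Qed.

Lemma psc_solution (N D : {poly rat}) (c : nat -> rat) K : D`_0 = 1 ->
  (forall i, (i < K)%N -> N`_i = \sum_(j < i.+1) D`_j * c (i - j)%N) ->
  forall k, (k < K)%N -> forall i, (i <= k)%N -> nth 0 (psc N D k) i = c i.
Proof.
move=> D0 hN; elim=> [|k IH] ltkK i leik.
  by move: leik; rewrite leqn0 => /eqP -> /=; rewrite D0 divr1 hN // big_ord1 D0 mul1r.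
rewrite /= nth_rcons size_psc; case: ltnP => [ltik | leki]; first by apply: IH => //; lia.
have -> : i = k.+1 by lia.
rewrite eqxx D0 divr1 hN // -(big_mkord xpredT (fun j => D`_j * c (k.+1 - j)%N)).
rewrite big_ltn // D0 mul1r subn0.
rewrite -[X in _ - X = _](eq_big_nat _ _ (F1 := fun j => D`_j * c (k.+1 - j)%N)) ?addrK //.
by move=> j /andP[lt0j ltjk]; rewrite IH //; lia.
Qed.

Lemma taylor_coef_approx (N D C : {poly rat}) (K k : nat) :
  D`_0 = 1 -> vanishes_below K (N - C * D) -> (k < K)%N -> taylor_coef N D k = C`_k.
Proof.
move=> D0 hND ltkK.
have lowD : lowdeg D = 0%N.
  by rewrite /lowdeg; case: (polyseq D) D0 => [|d s] //= ->; rewrite oner_neq0.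
rewrite /taylor_coef lowD addn0 /unshift lowD seq.drop0 polyseqK.
apply: (psc_solution D0 _ ltkK) => // i ltiK.
by move/eqP: (hND i ltiK); rewrite coefB mulrC coefM subr_eq0 => /eqP.
Qed.

Definition phi_step (v : {poly rat} * {poly rat}) : {poly rat} * {poly rat} :=
  (('X + 'X^2) * v.1 + v.2, 'X * v.1 + v.2).

(* [1,...,1] (even length) starts from [1,1]_q = 1 + q, while
   [1,...,1,2] starts from [1,2]_q = (1 + q + q^2)/(1 + q). *)
Definition phi_seed (odd_len : bool) : {poly rat} * {poly rat} :=
  if odd_len then (1 + 'X + 'X^2, 1 + 'X) else (1 + 'X, 1).

Lemma qint1 : qint 1%N = 1.
Proof. by rewrite /qint big_ord1 expr0. Qed.

Lemma qint2 : qint 2%N = 1 + 'X.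
Proof. by rewrite /qint big_ord_recr big_ord1 /= expr0 expr1. Qed.

Lemma qcf_aux_cons11 x t :
  qcf_aux [:: 1%N, 1%N, x & t] true = phi_step (qcf_aux (x :: t) true).
Proof. by rewrite /phi_step; case: t => [|y t] /=; rewrite qint1 !expr1; congr pair; ring. Qed.

Lemma mkseq_phi n : mkseq phi_cf n = nseq n 1%N.
Proof. by rewrite -{2}(size_mkseq phi_cf n); apply/all_pred1P/allP => _ /mapP[i _ ->]. Qed.

Lemma even_cf_ones n :
  even_cf (nseq n.+2 1%N) = if odd n then rcons (nseq n 1%N) 2%N else nseq n.+2 1%N.
Proof. by rewrite /even_cf size_nseq rev_nseq /=; case: (odd n); rewrite ?rev_cons ?rev_nseq. Qed.

Lemma qcf_aux_ones j : qcf_aux (nseq j.*2.+2 1%N) true = iter j phi_step (phi_seed false).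
Proof.
elim: j => [|j IH]; first by rewrite /= qint1 expr0 expr1 !mulr1.
by rewrite doubleS -[nseq _ _]/[:: 1%N, 1%N & nseq j.*2.+2 1%N] qcf_aux_cons11 IH.
Qed.

Lemma qcf_aux_ones_two j :
  qcf_aux (rcons (nseq j.*2.+1 1%N) 2%N) true = iter j phi_step (phi_seed true).
Proof.
elim: j => [|j IH]; first by rewrite /= qint1 qint2 mul1r expr1 -expr2.
by rewrite doubleS -[rcons _ _]/[:: 1%N, 1%N & rcons (nseq j.*2.+1 1%N) 2%N] qcf_aux_cons11 IH.
Qed.

Lemma qrat_cf_phi n : qrat_cf (mkseq phi_cf n.+2) = iter n./2 phi_step (phi_seed (odd n)).
Proof.
rewrite /qrat_cf mkseq_phi /= even_cf_ones.
move: (odd_double_half n); set j := n./2; case: (odd n) => /= <-.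
- exact: qcf_aux_ones_two.
- exact: qcf_aux_ones.
Qed.

(* Each step raises the order of N - C D by two, up to the order K to which
   C solves the fixed-point equation C = (C q + C q^2 + 1)/(q C + 1). *)
Lemma phi_step_error (C : {poly rat}) (K : nat) :
  vanishes_below K (C * 'X + C * 'X^2 - 'X * (C * C) + 1 - C) ->
  vanishes_below 1 (1 + 'X - C) ->
  forall i v, vanishes_below (minn i.*2 K) ((iter i phi_step v).1 - C * (iter i phi_step v).2).
Proof.
move=> fixC C0 i v; elim: i => [|i IH]; first by move=> j; rewrite min0n.
rewrite /= /phi_step /=; set N := (iter i phi_step v).1; set D := (iter i phi_step v).2.
have -> : ('X + 'X^2) * N + D - C * ('X * N + D) =
    'X * ((N - C * D) * (1 + 'X - C)) +
    D * (C * 'X + C * 'X^2 - 'X * (C * C) + 1 - C) by ring.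
apply: vanishes_belowD.
  apply: (@vanishes_below_le _ _ (minn i.*2 K + 1).+1); first lia.
  exact/vanishes_belowXM/vanishes_belowM.
by apply: (@vanishes_below_le _ _ (0 + K)); [lia | apply: vanishes_belowM].
Qed.

Lemma phi_step_denominator0 i v : (iter i phi_step v).2`_0 = v.2`_0.
Proof. by elim: i => //= i IH; rewrite coefD coefXM add0r. Qed.

Section PhiSeries.
Variable a : nat -> nat.
Hypothesis a0 : a 0%N = 1%N.
Hypothesis a1 : a 1%N = 1%N.
Hypothesis catalan_rec : forall n, (2 <= n)%N ->
  a n = (a n.-1 + \sum_(1 <= k < n.-1) a k * a (n - 2 - k)%N)%N.

Definition phi_abs (k : nat) : nat :=
  match k with 0 => 1 | 1 => 0 | k'.+1 => a k' end.

Definition phi_coef (k : nat) : rat := (-1) ^+ k * (phi_abs k)%:R.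

(* The Catalan recurrence in terms of |phi_k|; it is the coefficient
   identity behind the fixed-point equation, with the signs removed. *)
Lemma phi_abs_rec m :
  (phi_abs m.+2 + phi_abs m.+1 = phi_abs m + \sum_(j < m.+2) phi_abs j * phi_abs (m.+1 - j))%N.
Proof.
case: m => [|[|m]].
- by rewrite !big_ord_recr big_ord0 /= a1.
- by rewrite !big_ord_recr big_ord0 /= (@catalan_rec 2 isT) big_geq // a1.
rewrite -(big_mkord xpredT (fun j => phi_abs j * phi_abs (m.+3 - j))%N).
rewrite big_nat_recl // big_nat_recl // big_nat_recr // big_nat_recr //= subnn.
have -> : (m.+3 - m.+2 = 1)%N by lia.
have -> : (\sum_(0 <= i < m) a i.+1 * phi_abs (m.+3 - i.+2) =
           \sum_(0 <= i < m) a i.+1 * a (m - i))%N.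
  apply: eq_big_nat => i /andP[_ ltim].
  have -> : (m.+3 - i.+2 = (m - i.+1).+2)%N by lia.
  by rewrite /= subnSK.
have := @catalan_rec m.+3 isT; rewrite big_add1 /= big_nat_recr //=.
have -> : (m.+3 - 2 - m.+1 = 0)%N by lia.
rewrite a0 (eq_big_nat _ _ (F2 := fun k => a k.+1 * a (m - k))%N); first lia.
by move=> k /andP[_ ltkm]; congr (_ * a _)%N; lia.
Qed.

Lemma phi_coef_rec m :
  phi_coef m.+2 = phi_coef m.+1 + phi_coef m - \sum_(j < m.+2) phi_coef j * phi_coef (m.+1 - j).
Proof.
have signs : \sum_(j < m.+2) phi_coef j * phi_coef (m.+1 - j) =
    (-1) ^+ m.+1 * (\sum_(j < m.+2) phi_abs j * phi_abs (m.+1 - j))%N%:R.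
  rewrite natr_sum mulr_sumr; apply: eq_bigr => j _.
  have lejm : (j <= m.+1)%N by have := ltn_ord j; lia.
  have sign : (-1) ^+ j * (-1) ^+ (m.+1 - j) = (-1) ^+ m.+1 :> rat.
    by rewrite -exprD subnKC.
  by rewrite /phi_coef natrM -sign; ring.
have absE : (phi_abs m.+2)%:R = (phi_abs m)%:R +
    (\sum_(j < m.+2) phi_abs j * phi_abs (m.+1 - j))%N%:R - (phi_abs m.+1)%:R :> rat.
  by rewrite -natrD -phi_abs_rec natrD addrK.
by rewrite signs /phi_coef absE !exprS; ring.
Qed.

Definition phi_trunc (K : nat) : {poly rat} := \poly_(i < K) phi_coef i.

Lemma phi_trunc_fixpoint K :
  let C := phi_trunc K in
  vanishes_below K (C * 'X + C * 'X^2 - 'X * (C * C) + 1 - C).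
Proof.
move=> C i ltiK; have coefC j : (j < K)%N -> C`_j = phi_coef j by rewrite coef_poly => ->.
rewrite !coefD !coefN coefMX coefMXn coefXM coef1.
case: i ltiK => [|[|m]] ltiK /=.
- by rewrite coefC // /phi_coef expr0 mul1r subrr.
- by rewrite coefM big_ord1 !coefC //; try lia; rewrite /phi_coef /= !mulr0 expr0 !mul1r subrr.
- rewrite coefM subn2 /= (eq_bigr (fun j : 'I_m.+2 => phi_coef j * phi_coef (m.+1 - j))).
    by rewrite !coefC //; try lia; rewrite phi_coef_rec; ring.
  by move=> j _; rewrite !coefC //; have := ltn_ord j; lia.
Qed.

Lemma phi_trunc_const K : (0 < K)%N -> vanishes_below 1 (1 + 'X - phi_trunc K).
Proof.
move=> K0 [|i] // _; rewrite !coefD coefN coef_poly K0 coef1 coefX /phi_coef.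
by rewrite expr0 mul1r subrr.
Qed.

Lemma conv_coef_phi k n : (k.*2.+4 <= n)%N -> conv_coef phi_cf n k = phi_coef k.
Proof.
case: n => [|[|n]] // lekn; rewrite /conv_coef qrat_cf_phi.
have <- : (phi_trunc k.+2)`_k = phi_coef k by rewrite coef_poly ltnW.
apply: (@taylor_coef_approx _ _ _ k.+2) => //.
  by rewrite phi_step_denominator0; case: (odd n); rewrite /= ?coefD coef1 ?coefX ?addr0.
apply: (@vanishes_below_le _ _ (minn n./2.*2 k.+2)); first lia.
by apply: phi_step_error; [apply: phi_trunc_fixpoint | apply: phi_trunc_const].
Qed.

End PhiSeries.

Theorem proposition4p1 (a : nat -> nat) :
  a 0%N = 1%N -> a 1%N = 1%N ->
  (forall n, (2 <= n)%N ->
     a n = (a n.-1 + \sum_(1 <= k < n.-1) a k * a (n - 2 - k)%N)%N) ->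
  qcoef_limit phi_cf 0 1 /\ qcoef_limit phi_cf 1 0 /\
  (forall k, (2 <= k)%N ->
     qcoef_limit phi_cf k ((-1) ^+ k * (a k.-1)%:R)).
Proof.
move=> a0 a1 catalan_rec.
have stable k : qcoef_limit phi_cf k (phi_coef a k).
  by exists k.*2.+4 => n; apply: conv_coef_phi.
split; [|split].
- by have := stable 0%N; rewrite /phi_coef expr0 mul1r.
- by have := stable 1%N; rewrite /phi_coef mulr0.
- by case=> [|[|k]] // _; apply: stable.
Qed.
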